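(* Let $(M_1,M_2)$ be a state of a duplex network, fix $\ell\in\{1,2\}$, and let $\mathcal P=\big((v_0\xrightarrow{\ell_1}v_1),\dots,(v_{k-1}\xrightarrow{\ell_k}v_k)\big)$ be a CLAP (with chosen witness paths) of minimum length among all CLAPs with endpoints $(v_0,v_k)$. If there exist $i<j$ with $\ell_i=\ell_j=\ell$ such that the witness alternating paths of the $i$-th and $j$-th segments share at least one edge, then there exists another CLAP between $v_0$ and $v_k$ with strictly fewer segments.
   Context: A duplex network consists of directed graphs $G_1=(V,E_1)$, $G_2=(V,E_2)$ on a common finite node set $V$. For $\ell\in\{1,2\}$, $\mathcal B_\ell$ is the bipartite graph with vertex classes $V^+=\{v^+\}$, $V^-=\{v^-\}$ and an edge $\{u^+,v^-\}$ for each $(u,v)\in E_\ell$. A state is a pair of matchings $M_\ell$ in $\mathcal B_\ell$; $D_\ell=\{v\in V: v^-\text{ uncovered by }M_\ell\}$, $\mathrm{DD}_1=D_1\setminus D_2$, $\mathrm{DD}_2=D_2\setminus D_1$. An admissible segment $(u\xrightarrow{\ell}v)$ requires an $M_\ell$-alternating path (simple path in $\mathcal B_\ell$ alternating between $M_\ell$ and non-$M_\ell$ edges) between $u^-$ and $v^-$, called a witness path, and: for $\ell=1$, $u\in D_1$, $v\notin D_1$; for $\ell=2$, $u\notin D_2$, $v\in D_2$. A CLAP is a sequence of admissible segments $v_0\xrightarrow{\ell_1}v_1\cdots\xrightarrow{\ell_k}v_k$ with $v_0\in\mathrm{DD}_1$, $v_k\in\mathrm{DD}_2$, $\ell_{i+1}\ne\ell_i$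 for all $i$, and $v_0,\dots,v_k$ pairwise distinct; its length is the number $k$ of segments. *)

From mathcomp Require Import all_boot.
Set Implicit Arguments. Unset Strict Implicit. Unset Printing Implicit Defensive.

Inductive layer := L1 | L2.
Definition layer_eqb (a b : layer) : bool :=
  match a, b with L1, L1 | L2, L2 => true | _, _ => false end.

(* An edge {u^+, v^-} of B_l is encoded
   by the pair (u, v) : V * V; a matching is a set of such pairs. *)
Record state (V : finType) := State {
  E1 : rel V; E2 : rel V; M1 : {set V * V}; M2 : {set V * V} }.

Section Duplex.
Variable V : finType.

Definition is_matching (Er : rel V) (Mr : {set V * V}) : Prop :=
  [/\ (forall e, e \in Mr -> Er e.1 e.2),
      (forall e f, e \in Mr -> f \in Mr -> e.1 = f.1 -> e = f) &
      (forall e f, e \in Mr -> f \in Mr -> e.2 = f.2 -> e = f)].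

Variable S : state V.

Definition Ed (l : layer) : rel V := match l with L1 => E1 S | L2 => E2 S end.
Definition Md (l : layer) : {set V * V} := match l with L1 => M1 S | L2 => M2 S end.

(* D_l : nodes v whose copy v^- is not covered by M_l *)
Definition Dset (l : layer) : {set V} := [set v | ~~ [exists u, (u, v) \in Md l]].
Definition DD1 : {set V} := Dset L1 :\: Dset L2.
Definition DD2 : {set V} := Dset L2 :\: Dset L1.

(* vertices of B_l : inl v = v^+, inr v = v^- *)
Definition BV := (V + V)%type.

Definition bedge (x y : BV) : option (V * V) :=
  match x, y with
  | inl a, inr b => Some (a, b)
  | inr b, inl a => Some (a, b)
  | _, _ => None
  end.

Definition bstep (l : layer) (x y : BV) : bool :=
  if bedge x y is Some e then Ed l e.1 e.2 else false.

Definition bedges (x : BV) (s : seq BV) : seq (V * V) := pmap id (pairmap bedge x s).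

Definition alt_path (l : layer) (x : BV) (s : seq BV) : Prop :=
  [/\ uniq (x :: s), path (bstep l) x s &
      sorted (fun e f => (e \in Md l) != (f \in Md l)) (bedges x s)].

Definition witness (l : layer) (u v : V) (w : BV * seq BV) : Prop :=
  [/\ w.1 = inr u, last w.1 w.2 = inr v & alt_path l w.1 w.2].

Definition seg_cond (l : layer) (u v : V) : bool :=
  match l with
  | L1 => (u \in Dset L1) && (v \notin Dset L1)
  | L2 => (u \notin Dset L2) && (v \in Dset L2)
  end.

Definition admissible (l : layer) (u v : V) : Prop :=
  seg_cond l u v /\ exists w, witness l u v w.

(* A CLAP  v0 -l1-> v1 ... -lk-> vk  is encoded by v0 and the list
   segs = [:: (l1, v1); ...; (lk, vk)]. *)
Definition clap_nodes (v0 : V) (segs : seq (layer * V)) : seq V := v0 :: map snd segs.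
Definition clap_layers (segs : seq (layer * V)) : seq layer := map fst segs.
Definition clap_end (v0 : V) (segs : seq (layer * V)) : V := last v0 (map snd segs).

Definition is_CLAP (v0 : V) (segs : seq (layer * V)) : Prop :=
  [/\ v0 \in DD1, clap_end v0 segs \in DD2,
      uniq (clap_nodes v0 segs),
      sorted (fun a b => ~~ layer_eqb a b) (clap_layers segs) &
      forall i, i < size segs ->
        admissible (nth L1 (clap_layers segs) i)
                   (nth v0 (clap_nodes v0 segs) i)
                   (nth v0 (clap_nodes v0 segs) i.+1)].

(* ws is a choice of witness paths for the segments of the CLAP (0-indexed) *)
Definition clap_witnesses (v0 : V) (segs : seq (layer * V))
    (ws : seq (BV * seq BV)) : Prop :=
  size ws = size segs /\
  forall i, i < size segs ->
    witness (nth L1 (clap_layers segs) i)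
            (nth v0 (clap_nodes v0 segs) i)
            (nth v0 (clap_nodes v0 segs) i.+1)
            (nth (inr v0, [::]) ws i).

End Duplex.

From mathcomp Require Import all_boot zify.
Set Implicit Arguments. Unset Strict Implicit. Unset Printing Implicit Defensive.

(* Replace the segments i..j of the CLAP by the single layer-l segment
   v_i -> v_(j+1): nodes stay distinct, layers still alternate because
   l_i = l_j, and j - i >= 1 segments disappear.  A witness for v_i -> v_(j+1)
   follows the i-th witness up to a vertex it shares with the j-th one (the
   plus end of the common edge) and then the j-th witness, with loops removed.
   It alternates because on a witness of a layer-l segment whether an edge is
   matched depends only on the side of B_l it is traversed from (the side is
   fixed by the uncovered u^- for l = 1 and the uncovered v^- for l = 2), and
   this local property survives splicing and loop removal. *)

Definition shortcut (T : Type) (i j : nat) (s : seq T) : seq T := take i s ++ drop j s.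

Section Shortcut.
Variables (T : Type) (i j : nat).

Lemma size_shortcut (s : seq T) : i <= j <= size s -> size (shortcut i j s) = size s - (j - i).
Proof. by move=> /andP[ij js]; rewrite size_cat size_takel ?size_drop; lia. Qed.

Lemma nth_shortcut x0 (s : seq T) k : i <= j <= size s ->
  nth x0 (shortcut i j s) k = nth x0 s (if k < i then k else k + (j - i)).
Proof.
move=> /andP[ij js]; rewrite nth_cat size_takel; last lia.
case: ifP => ki; first by rewrite nth_take ?ki.
by rewrite nth_drop; congr nth; move/negbT: ki; lia.
Qed.

Lemma map_shortcut (U : Type) (f : T -> U) s : map f (shortcut i j s) = shortcut i j (map f s).
Proof. by rewrite map_cat map_take map_drop. Qed.

Lemma last_shortcut x (s : seq T) : j < size s -> last x (shortcut i j s) = last x s.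
Proof.
move=> js; have : 0 < size (drop j s) by rewrite size_drop subn_gt0.
by rewrite -[in RHS](cat_take_drop j s) !last_cat; case: (drop j s).
Qed.

Lemma sorted_shortcut (r : rel T) x0 (s : seq T) : sorted r s -> i <= j < size s ->
  nth x0 s i = nth x0 s j -> sorted r (shortcut i j s).
Proof.
move=> /(sortedP x0) rs /andP[ij js] sij; apply/(sortedP x0) => k.
have ijs : i <= j <= size s by rewrite ij ltnW.
rewrite size_shortcut // => ks; rewrite !nth_shortcut //.
case: (ltngtP k.+1 i) => ki.
- by apply: rs; lia.
- by rewrite addSn; apply: rs; lia.
- have -> : k.+1 + (j - i) = j by lia.
  by rewrite -sij -ki; apply: rs; lia.
Qed.

End Shortcut.

Lemma shortcut_uniq (T : eqType) i j (s : seq T) : i <= j -> uniq s -> uniq (shortcut i j s).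
Proof.
move=> ij; apply: subseq_uniq; rewrite -[X in subseq _ X](cat_take_drop i s).
by rewrite cat_subseq // -(subnK ij) -drop_drop drop_subseq.
Qed.

Lemma path_splice (T : eqType) (e : rel T) x s y t z :
  path e x s -> path e y t -> z \in x :: s -> z \in y :: t ->
  exists s', [/\ path e x s', uniq (x :: s') & last x s' = last y t].
Proof.
move=> + + zs zt; case/splitPl: s / zs => s1 s2 s1z; case/splitPl: t / zt => t1 t2 t1z.
rewrite !cat_path s1z t1z => /andP[ps1 _] /andP[_ pt2].
have pst : path e x (s1 ++ t2) by rewrite cat_path ps1 s1z.
have <- : last x (s1 ++ t2) = last y (t1 ++ t2) by rewrite !last_cat s1z t1z.
by case: (shortenP pst) => s' ps' us' _; exists s'.
Qed.

Section ParityPaths.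
Variables (V : finType) (S : state V) (l : layer).

Definition is_plus (x : BV V) : bool := if x is inl _ then true else false.

Definition bmatched (x y : BV V) : bool :=
  if bedge x y is Some e then e \in Md S l else false.

Definition alternates (e f : V * V) : bool := (e \in Md S l) != (f \in Md S l).

Definition parity_step (c : bool) : rel (BV V) :=
  fun x y => bstep S l x y && (bmatched x y == is_plus x (+) c).

Lemma bstep_is_plus x y : bstep S l x y -> is_plus y = ~~ is_plus x.
Proof. by case: x => a; case: y. Qed.

Lemma bstep_bedges x y s : bstep S l x y ->
  exists e, bedges x (y :: s) = e :: bedges y s /\ bmatched x y = (e \in Md S l).
Proof. by rewrite /bstep /bmatched /bedges /=; case: bedge => [e|] // _; exists e. Qed.

Lemma mem_bedges_plus (e : V * V) (x : BV V) s : e \in bedges x s -> inl e.1 \in x :: s.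
Proof.
elim: s x => [|y s IH] x //; rewrite /bedges /=.
case E: (bedge x y) => [f|] /=; last by move/IH => h; rewrite inE h orbT.
rewrite inE => /predU1P[-> | /IH h]; last by rewrite inE h orbT.
by move: E; case: x => a; case: y => b //= [<-]; rewrite !inE eqxx ?orbT.
Qed.

Lemma alt_path_parity c x y s :
  path (bstep S l) x (y :: s) -> sorted alternates (bedges x (y :: s)) ->
  bmatched x y = is_plus x (+) c -> path (parity_step c) x (y :: s).
Proof.
elim: s x y => [|z s IH] x y.
  by rewrite /= /parity_step => /andP[-> _] _ ->; rewrite eqxx.
move=> /= /andP[bxy pys]; have [e [-> mxy]] := bstep_bedges (z :: s) bxy.
move: (pys) => /andP[byz _]; have [f [Ef myz]] := bstep_bedges s byz.
rewrite Ef => /= /andP[ef srt] hxy; rewrite /parity_step bxy hxy eqxx /=.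
apply: IH => //; first by rewrite Ef.
move: ef; rewrite /alternates -mxy -myz hxy (bstep_is_plus bxy).
by clear hxy; case: (bmatched y z); case: (is_plus x); case: c.
Qed.

Lemma parity_path_alt c x s : path (parity_step c) x s ->
  path (bstep S l) x s /\ sorted alternates (bedges x s).
Proof.
elim: s x => [|y s IH] x /=; first by rewrite /bedges.
move=> /andP[/andP[bxy /eqP mxy] pys]; have [bys srt] := IH y pys.
have [e [-> me]] := bstep_bedges s bxy; split; first by rewrite bxy.
case: s pys {bys IH} srt => [|z s] //= /andP[/andP[byz /eqP myz] _].
have [f [-> mf]] := bstep_bedges s byz; rewrite /= => ->; rewrite andbT.
rewrite /alternates -me -mf mxy myz (bstep_is_plus bxy).
by clear mxy myz; case: (is_plus x); case: c.
Qed.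

Lemma bmatched_uncoveredl a y : a \in Dset S l -> bmatched (inr a) y = false.
Proof. by rewrite inE => /existsPn na; case: y => b //; rewrite /bmatched /= (negbTE (na b)). Qed.

Lemma bmatched_uncoveredr x a : a \in Dset S l -> bmatched x (inr a) = false.
Proof. by rewrite inE => /existsPn na; case: x => b //; rewrite /bmatched /= (negbTE (na b)). Qed.

Lemma parity_step_from_uncovered c a y : a \in Dset S l -> parity_step c (inr a) y -> c = false.
Proof. by move=> /bmatched_uncoveredl ma /andP[_]; rewrite ma; case: c. Qed.

Lemma parity_step_to_uncovered c x a : a \in Dset S l -> parity_step c x (inr a) -> c = true.
Proof.
move=> /bmatched_uncoveredr ma /andP[/bstep_is_plus /= xp]; rewrite ma.
by case: x xp => // b _; case: c.
Qed.

Lemma seg_cond_neq u v : seg_cond S l u v -> u != v.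
Proof. by case: eqP => [->|//]; case: l => /=; case: (v \in _). Qed.

Lemma seg_cond_uncovered u v : seg_cond S l u v ->
  if layer_eqb l L2 then v \in Dset S l else u \in Dset S l.
Proof. by case: l => /andP[]. Qed.

Lemma witness_parity_path u v w : seg_cond S l u v -> witness S l u v w ->
  path (parity_step (layer_eqb l L2)) w.1 w.2.
Proof.
move=> sc; case: w => _ s [/= -> lv [_ ps srt]].
case: s lv ps srt => [/= [uv] | y s lv ps srt]; first by move: (seg_cond_neq sc); rewrite uv eqxx.
set c := bmatched (inr u) y.
have pc : path (parity_step c) (inr u) (y :: s) by apply: alt_path_parity.
suff <- : c = layer_eqb l L2 by [].
have first_step : parity_step c (inr u) y by case/andP: pc.
move: pc lv; rewrite lastI rcons_path last_rcons => /andP[_ last_step] lv.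
rewrite lv in last_step.
case: (layer_eqb l L2) (seg_cond_uncovered sc) => [hv | hu].
- exact: parity_step_to_uncovered hv last_step.
- exact: parity_step_from_uncovered hu first_step.
Qed.

Lemma admissible_splice u1 v1 u2 v2 w1 w2 e :
  seg_cond S l u1 v1 -> seg_cond S l u2 v2 ->
  witness S l u1 v1 w1 -> witness S l u2 v2 w2 ->
  e \in bedges w1.1 w1.2 -> e \in bedges w2.1 w2.2 -> admissible S l u1 v2.
Proof.
move=> sc1 sc2 wit1 wit2 e1 e2; split; first by case: l sc1 sc2 => /= /andP[-> _] /andP[_ ->].
have p1 := witness_parity_path sc1 wit1; have p2 := witness_parity_path sc2 wit2.
case: w1 wit1 p1 e1 => x s [/= -> _ _] p1 e1; case: w2 wit2 p2 e2 => y t [/= _ lt _] p2 e2.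
have [s' [ps' us' ls']] := path_splice p1 p2 (mem_bedges_plus e1) (mem_bedges_plus e2).
have [bs' alts'] := parity_path_alt ps'.
by exists (inr u1, s'); split; rewrite //= ls'.
Qed.

End ParityPaths.

Section ClapShortcut.
Variables (V : finType) (S : state V).

Lemma clap_nodes_shortcut v0 i j (segs : seq (layer * V)) :
  clap_nodes v0 (shortcut i j segs) = shortcut i.+1 j.+1 (clap_nodes v0 segs).
Proof. by rewrite /clap_nodes map_shortcut. Qed.

Lemma clap_layers_shortcut i j (segs : seq (layer * V)) :
  clap_layers (shortcut i j segs) = shortcut i j (clap_layers segs).
Proof. exact: map_shortcut. Qed.

Lemma clap_end_shortcut v0 i j (segs : seq (layer * V)) : j < size segs ->
  clap_end v0 (shortcut i j segs) = clap_end v0 segs.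
Proof. by move=> js; rewrite /clap_end map_shortcut last_shortcut // size_map. Qed.

Lemma is_CLAP_shortcut v0 segs i j :
  is_CLAP S v0 segs -> i <= j < size segs ->
  nth L1 (clap_layers segs) i = nth L1 (clap_layers segs) j ->
  admissible S (nth L1 (clap_layers segs) j)
    (nth v0 (clap_nodes v0 segs) i) (nth v0 (clap_nodes v0 segs) j.+1) ->
  is_CLAP S v0 (shortcut i j segs).
Proof.
move=> [h0 hend huniq hsort hadm] /andP[ij js] lij adm_ij.
have ijs : i <= j <= size segs by rewrite ij ltnW.
have ijsN : i.+1 <= j.+1 <= size (clap_nodes v0 segs) by rewrite /= size_map !ltnS.
split => //.
- by rewrite clap_end_shortcut.
- by rewrite clap_nodes_shortcut shortcut_uniq.
- by rewrite clap_layers_shortcut (sorted_shortcut (x0 := L1)) ?size_map ?ij.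
move=> k; rewrite size_shortcut // => ks.
rewrite clap_layers_shortcut clap_nodes_shortcut !nth_shortcut ?size_map // !ltnS.
case: (ltngtP k i) => ki.
- by apply: hadm; lia.
- by rewrite addSn; apply: hadm; lia.
- by rewrite ki addSn subnKC.
Qed.

End ClapShortcut.

Theorem mainTheorem4 (V : finType) (S : state V)
    (hM1 : is_matching (E1 S) (M1 S)) (hM2 : is_matching (E2 S) (M2 S))
    (l : layer) (v0 : V) (segs : seq (layer * V)) (ws : seq (BV V * seq (BV V))) :
  is_CLAP S v0 segs ->
  clap_witnesses S v0 segs ws ->
  (forall segs', is_CLAP S v0 segs' -> clap_end v0 segs' = clap_end v0 segs ->
     size segs <= size segs') ->
  forall i j, i < j -> j < size segs ->
  nth L1 (clap_layers segs) i = l -> nth L1 (clap_layers segs) j = l ->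
  (exists e, (e \in bedges (nth (inr v0, [::]) ws i).1 (nth (inr v0, [::]) ws i).2) &&
             (e \in bedges (nth (inr v0, [::]) ws j).1 (nth (inr v0, [::]) ws j).2)) ->
  exists segs', [/\ is_CLAP S v0 segs', clap_end v0 segs' = clap_end v0 segs &
                    size segs' < size segs].
Proof.
move=> clap [_ wit] _ i j ij js li lj [e /andP[ei ej]].
have iS : i < size segs := ltn_trans ij js.
have [_ _ _ _ adm] := clap.
have [sci _] := adm i iS; have [scj _] := adm j js.
have wi := wit i iS; have wj := wit j js.
rewrite li in sci wi; rewrite lj in scj wj.
exists (shortcut i j segs); split.
- apply: is_CLAP_shortcut; rewrite ?li ?lj ?(ltnW ij) //.
  exact: admissible_splice sci scj wi wj ei ej.
- exact: clap_end_shortcut.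
- rewrite size_shortcut; lia.
Qed.
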